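(* Let $m\ge 1$ and let $\alpha_0,\dots,\alpha_{m-1},\beta_0,\dots,\beta_{m-1}$ be real numbers. Consider the element \[ P=\sum_{k=0}^{m-1}\alpha_kx^k+\sum_{k=0}^{m-1}\beta_k\,yx^k \] both in $\mathbb{C}[\mathbb{Z}/m\mathbb{Z}\times\mathbb{Z}/2\mathbb{Z}]$, where $\mathbb{Z}/m\mathbb{Z}\times\mathbb{Z}/2\mathbb{Z}=\langle x,y\mid x^m,y^2,[x,y]\rangle$, and in $\mathbb{C}[D_m]$, where $D_m=\langle x,y\mid x^m,y^2,yxyx\rangle$ (same coefficients, same words). Assume $P$ is reciprocal in $\mathbb{C}[\mathbb{Z}/m\mathbb{Z}\times\mathbb{Z}/2\mathbb{Z}]$ (then it is also reciprocal in $\mathbb{C}[D_m]$). Let $k=\sum_k(|\alpha_k|+|\beta_k|)$ and $|\lambda|<1/k$. Then \[ m_{\mathbb{Z}/m\mathbb{Z}\times\mathbb{Z}/2\mathbb{Z}}(P,\lambda)=m_{D_m}(P,\lambda). \]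
   Context: For a group $\Gamma$ and $Q=\sum_{g\in\Gamma}c_g g\in\mathbb{C}\Gamma$ (finite sum), the reciprocal is $Q^*=\sum_g\overline{c_g}\,g^{-1}$, and $Q$ is reciprocal if $Q=Q^*$. For reciprocal $P\in\mathbb{C}\Gamma$ with $l_1$-norm $k=\sum_g|c_g|$ and $|\lambda|<1/k$, define $m_\Gamma(P,\lambda)=-\sum_{n\ge1}a_n\lambda^n/n$, where $a_n$ is the coefficient of the identity element of $\Gamma$ in $P^n$. *)

From HB Require Import structures.
From mathcomp Require Import all_boot all_order all_algebra all_fingroup.
From mathcomp Require Import complex.
From mathcomp Require Import all_classical all_reals all_analysis.

Set Implicit Arguments.
Unset Strict Implicit.
Unset Printing Implicit Defensive.

Import Order.TTheory GRing.Theory Num.Theory.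
Import numFieldTopology.Exports numFieldNormedType.Exports.
Local Open Scope ring_scope.

(* The two groups of order 2m, m = n.+1.  An element (i, a) stands     *)
(* for the word x^i y^a.                                               *)

Definition ZmZ2 (n : nat) : Type := ('I_n.+1 * bool)%type.
HB.instance Definition _ n := Finite.on (ZmZ2 n).

Section ZmZ2Group.
Variable n : nat.
Local Notation G := (ZmZ2 n).
Definition zz_mul (u v : G) : G := ((u.1 + v.1)%R, addb u.2 v.2).
Definition zz_one : G := (0%R, false).
Definition zz_inv (u : G) : G := ((- u.1)%R, u.2).
Lemma zz_mulA : associative zz_mul.
Proof. by move=> [i a] [j b] [k c]; rewrite /zz_mul /= addrA addbA. Qed.
Lemma zz_mul1 : left_id zz_one zz_mul.
Proof. by move=> [i a]; rewrite /zz_mul /= add0r. Qed.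
Lemma zz_mulV : left_inverse zz_one zz_inv zz_mul.
Proof. by move=> [i a]; rewrite /zz_mul /= addNr addbb. Qed.
HB.instance Definition _ := Finite_isGroup.Build G zz_mulA zz_mul1 zz_mulV.
End ZmZ2Group.

(* D_m = < x, y | x^m, y^2, yxyx >, with x^i y^a * x^j y^b = x^(i + (-1)^a j) y^(a+b) *)
Definition Dih (n : nat) : Type := ('I_n.+1 * bool)%type.
HB.instance Definition _ n := Finite.on (Dih n).

Section DihGroup.
Variable n : nat.
Local Notation G := (Dih n).
Definition sgn (a : bool) (j : 'I_n.+1) : 'I_n.+1 := if a then (- j)%R else j.
Definition dh_mul (u v : G) : G := ((u.1 + sgn u.2 v.1)%R, addb u.2 v.2).
Definition dh_one : G := (0%R, false).
Definition dh_inv (u : G) : G := (sgn (~~ u.2) u.1, u.2).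
Lemma dh_mulA : associative dh_mul.
Proof.
move=> [i a] [j b] [k c]; rewrite /dh_mul /= addbA.
by case: a; case: b; rewrite /sgn /= ?opprD ?opprK addrA.
Qed.
Lemma dh_mul1 : left_id dh_one dh_mul.
Proof. by move=> [i a]; rewrite /dh_mul /= add0r. Qed.
Lemma dh_mulV : left_inverse dh_one dh_inv dh_mul.
Proof. by move=> [i [|]]; rewrite /dh_mul /sgn /= ?addrN ?addNr. Qed.
HB.instance Definition _ := Finite_isGroup.Build G dh_mulA dh_mul1 dh_mulV.
End DihGroup.

Definition zz_x n : ZmZ2 n := ((Zp1 : 'I_n.+1), false).
Definition zz_y n : ZmZ2 n := ((0%R : 'I_n.+1), true).
Definition dh_x n : Dih n := ((Zp1 : 'I_n.+1), false).
Definition dh_y n : Dih n := ((0%R : 'I_n.+1), true).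

Section GroupAlgebra.
Variable R : realType.
Local Notation C := R[i].
Variable gT : finGroupType.

Definition galg := {ffun gT -> C}.

Definition gdelta (g : gT) : galg := [ffun h => (h == g)%:R].

Definition gmul (f h : galg) : galg :=
  [ffun z => \sum_(g : gT) f g * h ((g^-1 * z)%g)].

Definition gpow (f : galg) (n : nat) : galg := iter n (gmul f) (gdelta 1%g).

Definition grecip (f : galg) : galg := [ffun g => (f (g^-1)%g)^*].
Definition greciprocal (f : galg) : Prop := f = grecip f.

Definition gcoef1 (f : galg) (n : nat) : C := gpow f n 1%g.

(* m_G(P, lambda) = - sum_{n>=1} a_n lambda^n / n, as the limit of the
   partial sums of the series with general term (reindexed n -> n.+1) *)
Definition mahler_term (f : galg) (l : C) (n : nat) : C :=
  gcoef1 f n.+1 * l ^+ n.+1 / n.+1%:R.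
Definition mahlerG (f : galg) (l : C) : C :=
  - limn (series (mahler_term f l : nat -> (C : numClosedFieldType))) : C.

Definition Pelem (m : nat) (alpha beta : 'I_m -> R) (x y : gT) : galg :=
  \sum_(k < m) ((alpha k)%:C%C *: gdelta (x ^+ k)%g
                + (beta k)%:C%C *: gdelta (y * x ^+ k)%g).
End GroupAlgebra.

(* Since P has real coefficients, reciprocity in Z/m x Z/2 means that P is
   invariant under the inversion (i, a) |-> (-i, a) of this abelian group; in
   particular beta_(-k) = beta_k, so P has the same coefficients in D_m, where
   y x^k is the pair (-k, true).  On the common carrier, g^-1 z computed in D_m
   and in Z/m x Z/2 differ at most by that inversion, so the two convolutions
   agree on inversion-invariant functions.  Inversion being an automorphism,
   every power of P stays invariant, hence P^n has the same coefficients in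
   both group algebras, and the series defining the two Mahler measures
   coincide term by term. *)

From HB Require Import structures.
From mathcomp Require Import all_boot all_order all_algebra all_fingroup.
From mathcomp Require Import complex.
From mathcomp Require Import all_classical all_reals all_analysis.
Import Order.TTheory GRing.Theory Num.Theory.
Import numFieldTopology.Exports numFieldNormedType.Exports.

Set Implicit Arguments.
Unset Strict Implicit.
Unset Printing Implicit Defensive.

Local Open Scope ring_scope.

Lemma sumr_delta (I : finType) (V : nmodType) (c : I -> V) (i : I) :
  \sum_j c j *+ (i == j) = c i.
Proof.
rewrite (bigD1 i) //= eqxx mulr1n big1 ?addr0 // => j.
by rewrite eq_sym => /negPf ->.
Qed.

Section GroupAlgebra.
Variables (R : realType) (gT : finGroupType).

Lemma gpowS (F : galg R gT) k : gpow F k.+1 = gmul F (gpow F k).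
Proof. by []. Qed.

Lemma PelemE m (alpha beta : 'I_m -> R) (x y g : gT) :
  Pelem alpha beta x y g =
  \sum_(k < m) ((alpha k)%:C%C *+ (g == x ^+ k)%g
                + (beta k)%:C%C *+ (g == y * x ^+ k)%g).
Proof.
rewrite sum_ffunE; apply: eq_bigr => k _; rewrite !ffunE.
by congr (_ + _); apply: mulr_natr.
Qed.

Lemma Pelem_real m (alpha beta : 'I_m -> R) (x y g : gT) :
  Pelem alpha beta x y g \is Num.real.
Proof.
rewrite PelemE; apply: rpred_sum => k _.
by apply: rpredD; apply: rpredMn; apply/complex_realP; eexists.
Qed.

Lemma greciprocal_inv (F : galg R gT) :
  (forall g, F g \is Num.real) -> greciprocal F -> forall g, F g^-1%g = F g.
Proof. by move=> realF recF g; rewrite {2}recF ffunE conj_Creal. Qed.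

Lemma mahlerG_eq (hT : finGroupType) (F : galg R gT) (H : galg R hT) l :
  gcoef1 F =1 gcoef1 H -> mahlerG F l = mahlerG H l.
Proof.
move=> eFH; rewrite /mahlerG (_ : mahler_term F l = mahler_term H l) //.
by apply/funext => k; rewrite /mahler_term eFH.
Qed.

Variable sigma : gT -> gT.
Hypotheses (sigmaM : {morph sigma : g h / (g * h)%g}) (sigma_inj : injective sigma).

Lemma morph_g1 : sigma 1%g = 1%g.
Proof. by apply: (@mulgI _ (sigma 1%g)); rewrite -sigmaM !mulg1. Qed.

Lemma morph_invMg g h : sigma (g^-1 * h)%g = ((sigma g)^-1 * sigma h)%g.
Proof. by apply: (@mulgI _ (sigma g)); rewrite -sigmaM !mulKVg. Qed.

Lemma gmul_invariant (F H : galg R gT) :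
  (forall g, F (sigma g) = F g) -> (forall g, H (sigma g) = H g) ->
  forall g, gmul F H (sigma g) = gmul F H g.
Proof.
move=> sF sH z; rewrite !ffunE (reindex_inj sigma_inj).
by apply: eq_bigr => g _; rewrite -morph_invMg sF sH.
Qed.

Lemma gpow_invariant (F : galg R gT) :
  (forall g, F (sigma g) = F g) -> forall k g, gpow F k (sigma g) = gpow F k g.
Proof.
move=> sF; elim=> [|k IHk] g; last by rewrite gpowS; apply: gmul_invariant.
by rewrite /gpow /= !ffunE -{1}morph_g1 (inj_eq sigma_inj).
Qed.
End GroupAlgebra.

Section DirectAndDihedral.
Variables (R : realType) (n : nat).

Lemma zz_mulE (u v : ZmZ2 n) : (u * v)%g = (u.1 + v.1, u.2 (+) v.2).
Proof. by []. Qed.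

Lemma zz_invE (u : ZmZ2 n) : (u^-1)%g = (- u.1, u.2).
Proof. by []. Qed.

Lemma dh_mulE (u v : Dih n) : (u * v)%g = (u.1 + sgn u.2 v.1, u.2 (+) v.2).
Proof. by []. Qed.

Lemma dh_invE (u : Dih n) : (u^-1)%g = (sgn (~~ u.2) u.1, u.2).
Proof. by []. Qed.

Lemma zz_mulC (u v : ZmZ2 n) : (u * v = v * u)%g.
Proof. by rewrite !zz_mulE addrC addbC. Qed.

Lemma zz_invM : {morph (fun u : ZmZ2 n => u^-1)%g : u v / (u * v)%g}.
Proof. by move=> u v; rewrite invMg zz_mulC. Qed.

Lemma zz_xX k : (zz_x n ^+ k)%g = (inZp k, false).
Proof.
elim: k => [|k IHk]; first by congr pair; apply: val_inj; rewrite /= mod0n.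
by rewrite expgS IHk zz_mulE; congr pair; apply: val_inj; rewrite /= modnDm.
Qed.

Lemma dh_xX k : (dh_x n ^+ k)%g = (inZp k, false).
Proof.
elim: k => [|k IHk]; first by congr pair; apply: val_inj; rewrite /= mod0n.
by rewrite expgS IHk dh_mulE; congr pair; apply: val_inj; rewrite /= modnDm.
Qed.

Lemma Pelem_zz (alpha beta : 'I_n.+1 -> R) i a :
  Pelem alpha beta (zz_x n) (zz_y n) (i, a) = (if a then beta i else alpha i)%:C%C.
Proof.
rewrite PelemE; under eq_bigr => k _ do
  rewrite zz_xX zz_mulE /= add0r valZpK !xpair_eqE.
case: a; under eq_bigr => k _ do rewrite /= ?andbT ?andbF mulr0n ?add0r ?addr0.
all: exact: sumr_delta.
Qed.

Lemma Pelem_dh (alpha beta : 'I_n.+1 -> R) i a :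
  Pelem alpha beta (dh_x n) (dh_y n) (i, a) = (if a then beta (- i) else alpha i)%:C%C.
Proof.
rewrite PelemE; under eq_bigr => k _ do
  rewrite dh_xX dh_mulE /= add0r valZpK !xpair_eqE.
case: a; under eq_bigr => k _ do rewrite /= ?andbT ?andbF mulr0n ?add0r ?addr0.
  rewrite (reindex_inj oppr_inj); under eq_bigr => k _ do rewrite opprK.
  exact: sumr_delta (fun k => (beta (- k))%:C%C) i.
exact: sumr_delta.
Qed.

Lemma Pelem_dh_zz (alpha beta : 'I_n.+1 -> R) :
  (forall u, Pelem alpha beta (zz_x n) (zz_y n) u^-1%g =
             Pelem alpha beta (zz_x n) (zz_y n) u) ->
  Pelem alpha beta (dh_x n) (dh_y n) =1 Pelem alpha beta (zz_x n) (zz_y n).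
Proof.
(* Unrestricted rewrites would try the slow, failing conversion between the
   D_m and Z/m x Z/2 sides, which live on the same carrier. *)
move=> invP [i [|]]; rewrite [LHS]Pelem_dh; last by rewrite [RHS]Pelem_zz.
by rewrite -[RHS]invP zz_invE [RHS]Pelem_zz.
Qed.

(* The cast [(g : ZmZ2 n)] reads the same pair in the direct product. *)
Lemma dh_invMg_zz (g z : Dih n) :
  (g^-1 * z)%g = if g.2 then (((g : ZmZ2 n)^-1 * z)^-1)%g else ((g : ZmZ2 n)^-1 * z)%g.
Proof.
case: g z => j [] [i a]; rewrite !dh_mulE !dh_invE !zz_invE !zz_mulE //=.
by rewrite opprD opprK addrC.
Qed.

Lemma gmul_dh_zz (F H : galg R (ZmZ2 n)) (F' H' : galg R (Dih n)) :
  F' =1 F -> H' =1 H -> (forall u, H u^-1%g = H u) -> gmul F' H' =1 gmul F H.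
Proof.
move=> eF eH invH z; rewrite !ffunE; apply: eq_bigr => g _.
by rewrite eF eH dh_invMg_zz; case: ifP => // _; rewrite invH.
Qed.

Lemma gpow_dh_zz (F : galg R (ZmZ2 n)) (F' : galg R (Dih n)) :
  F' =1 F -> (forall u, F u^-1%g = F u) -> forall k, gpow F' k =1 gpow F k.
Proof.
move=> eF invF; elim=> [|k IHk]; first by move=> u; rewrite /gpow /= !ffunE.
by rewrite !gpowS; apply: gmul_dh_zz eF IHk (gpow_invariant zz_invM invg_inj invF k).
Qed.
End DirectAndDihedral.

Theorem theorem7p2 (R : realType) (n : nat) (alpha beta : 'I_n.+1 -> R)
    (lambda : R[i]) :
  greciprocal (Pelem alpha beta (zz_x n) (zz_y n)) ->
  `|lambda| * (\sum_(k < n.+1) (`|alpha k| + `|beta k|))%:C%C < 1 ->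
  mahlerG (Pelem alpha beta (zz_x n) (zz_y n)) lambda =
  mahlerG (Pelem alpha beta (dh_x n) (dh_y n)) lambda.
Proof.
(* The two series agree termwise. *)
move=> recP _.
have invP := greciprocal_inv (Pelem_real alpha beta (zz_x n) (zz_y n)) recP.
apply: mahlerG_eq => k; symmetry.
exact: gpow_dh_zz (Pelem_dh_zz invP) invP k 1%g.
Qed.
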